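(* Let $f = \sigma_m \circ f_m \circ \sigma_{m-1} \circ f_{m-1} \circ \cdots \circ \sigma_1 \circ f_1$ be a CNN acting on bounded fields $\mathbb{Z}^2 \to \mathbb{R}$, where each $f_i(\bm{X}) = \bm{X} \ast K_i$ is a convolution with a finitely supported kernel $K_i \colon \mathbb{Z}^2 \to \mathbb{R}$ and each $\sigma_i \colon \mathbb{R} \to \mathbb{R}$ is a piecewise differentiable activation applied pointwise. If each combined layer $\sigma_i \circ f_i$ is equivariant with respect to arbitrary uniform motion (i.e. $(\sigma_i\circ f_i)(\bm{X} + \bm{C}) = (\sigma_i\circ f_i)(\bm{X}) + \bm{C}$ for all fields $\bm{X}$ and constant fields $\bm{C}$), then $f$ is an affine map.
   Context: Convolution: $(\bm{X}\ast K)(p) = \sum_{q \in \mathbb{Z}^2} \bm{X}(p+q)K(q)$. A constant field takes the same real value at every point of $\mathbb{Z}^2$. *)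

From Stdlib Require Import Reals ZArith List.
Open Scope R_scope.

Definition point := (Z * Z)%type.
Definition field := point -> R.

Definition padd (p q : point) : point := ((fst p + fst q)%Z, (snd p + snd q)%Z).

Definition bounded_field (X : field) : Prop := exists M : R, forall p, Rabs (X p) <= M.

Definition const_field (c : R) : field := fun _ => c.

Definition fadd (X Y : field) : field := fun p => X p + Y p.
Definition fscale (a : R) (X : field) : field := fun p => a * X p.

Definition supported_in (N : nat) (K : field) : Prop :=
  forall q : point, (Z.abs (fst q) > Z.of_nat N)%Z \/ (Z.abs (snd q) > Z.of_nat N)%Z -> K q = 0.

Definition Zrange (N : nat) : list Z :=
  map (fun k => (Z.of_nat k - Z.of_nat N)%Z) (seq 0 (2 * N + 1)).

Definition Rsum (l : list R) : R := fold_right Rplus 0 l.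

Definition boxsum (N : nat) (g : point -> R) : R :=
  Rsum (map (fun a => Rsum (map (fun b => g (a, b)) (Zrange N))) (Zrange N)).

(* Convolution (X * K)(p) = sum_{q in Z^2} X(p+q) K(q); for K supported in
   [-N,N]^2 the sum over Z^2 is exactly the sum over that box. *)
Definition conv (N : nat) (K : field) (X : field) : field :=
  fun p => boxsum N (fun q => X (padd p q) * K q).

Definition piecewise_differentiable (s : R -> R) : Prop :=
  exists bad : list R, forall x, ~ In x bad -> exists d, derivable_pt_lim s x d.

Definition layer (sigma : R -> R) (N : nat) (K : field) (X : field) : field :=
  fun p => sigma (conv N K X p).

(* The CNN with layers indexed 0..m-1, applied in order 0 first. *)
Fixpoint cnn (sigma : nat -> R -> R) (N : nat -> nat) (K : nat -> field)
    (m : nat) (X : field) : field :=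
  match m with
  | O => X
  | S k => layer (sigma k) (N k) (K k) (cnn sigma N K k X)
  end.

Definition affine_on_bounded (f : field -> field) : Prop :=
  exists (L : field -> field) (B : field),
    (forall (a b : R) (X Y : field), bounded_field X -> bounded_field Y ->
        forall p, L (fadd (fscale a X) (fscale b Y)) p = a * L X p + b * L Y p) /\
    (forall X, bounded_field X -> forall p, f X p = L X p + B p).

(* Feeding a constant field c into a layer shows that the convolution maps it
   to the constant c * S, where S is the total mass of the kernel, so
   equivariance gives sigma (c * S) = sigma 0 + c for every c.  Hence S <> 0
   and sigma is the affine map t |-> sigma 0 + t / S, so every layer is an
   affine map of fields, and so is their composite. *)

From Stdlib Require Import Reals ZArith List Lra Lia.
Open Scope R_scope.

Definition field_linear (L : field -> field) : Prop :=
  forall (a b : R) (X Y : field) p,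
    L (fadd (fscale a X) (fscale b Y)) p = a * L X p + b * L Y p.

Definition field_affine (f : field -> field) : Prop :=
  exists (L : field -> field) (B : field),
    field_linear L /\ forall X p, f X p = L X p + B p.

Lemma field_affine_on_bounded (f : field -> field) :
  field_affine f -> affine_on_bounded f.
Proof.
  intros [L [B [HL HB]]]; exists L, B; split; intros; auto.
Qed.

Lemma Rsum_map_lin (A : Type) (l : list A) (g h k : A -> R) (a b : R) :
  (forall x, k x = a * g x + b * h x) ->
  Rsum (map k l) = a * Rsum (map g l) + b * Rsum (map h l).
Proof.
  intro Hk; induction l as [|x l IH]; simpl; [ring|].
  rewrite IH, Hk; ring.
Qed.

Lemma boxsum_lin (n : nat) (g h k : point -> R) (a b : R) :
  (forall x, k x = a * g x + b * h x) ->
  boxsum n k = a * boxsum n g + b * boxsum n h.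
Proof.
  intro Hk; unfold boxsum.
  apply Rsum_map_lin; intro x; apply Rsum_map_lin; intro y; apply Hk.
Qed.

Lemma conv_lin (n : nat) (K X Y Z : field) (a b : R) :
  (forall p, Z p = a * X p + b * Y p) ->
  forall p, conv n K Z p = a * conv n K X p + b * conv n K Y p.
Proof.
  intros HZ p; unfold conv.
  apply boxsum_lin; intro q; rewrite HZ; ring.
Qed.

Lemma conv_const (n : nat) (K : field) (c : R) p :
  conv n K (const_field c) p = c * boxsum n K.
Proof.
  unfold conv, const_field.
  rewrite (boxsum_lin n K K _ c 0) by (intro; ring); ring.
Qed.

Lemma bounded_const_field (c : R) : bounded_field (const_field c).
Proof.
  exists (Rabs c); intro; unfold const_field; lra.
Qed.

Lemma activation_shift_of_layer_equivariant (sigma : R -> R) (n : nat) (K : field) :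
  (forall (X : field) (c : R), bounded_field X ->
     forall p, layer sigma n K (fadd X (const_field c)) p = layer sigma n K X p + c) ->
  forall c, sigma (c * boxsum n K) = sigma 0 + c.
Proof.
  intros Hequiv c.
  pose proof (Hequiv (const_field 0) c (bounded_const_field 0) (0%Z, 0%Z)) as E.
  unfold layer in E.
  rewrite (conv_lin n K (const_field 0) (const_field 1) _ 1 c) in E
    by (intro; unfold fadd, const_field; ring).
  rewrite !conv_const in E.
  replace (1 * (0 * boxsum n K) + c * (1 * boxsum n K)) with (c * boxsum n K) in E by ring.
  replace (0 * boxsum n K) with 0 in E by ring.
  exact E.
Qed.

Lemma affine_of_scaled_shift (sigma : R -> R) (S : R) :
  (forall c, sigma (c * S) = sigma 0 + c) ->
  S <> 0 /\ forall t, sigma t = sigma 0 + t / S.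
Proof.
  intro Hshift.
  assert (HS : S <> 0).
  { intro HS0; pose proof (Hshift 1) as E.
    rewrite HS0, Rmult_0_r in E; lra. }
  split; [exact HS|].
  intro t; rewrite <- Hshift; f_equal; field; exact HS.
Qed.

Lemma field_affine_layer_comp (f : field -> field) (sigma : R -> R) (n : nat) (K : field) (S : R) :
  S <> 0 -> (forall t, sigma t = sigma 0 + t / S) ->
  field_affine f -> field_affine (fun X => layer sigma n K (f X)).
Proof.
  intros HS Hsigma [L [B [HL HB]]].
  exists (fun X p => conv n K (L X) p / S), (fun p => sigma 0 + conv n K B p / S).
  split.
  - intros a b X Y p.
    rewrite (conv_lin n K (L X) (L Y) _ a b) by (intro; apply HL).
    field; exact HS.
  - intros X p; unfold layer; rewrite Hsigma.
    rewrite (conv_lin n K (L X) B _ 1 1) by (intro; rewrite HB; ring).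
    field; exact HS.
Qed.

Lemma cnn_field_affine (m : nat) (sigma : nat -> R -> R) (N : nat -> nat) (K : nat -> field) :
  (forall i, (i < m)%nat -> forall c, sigma i (c * boxsum (N i) (K i)) = sigma i 0 + c) ->
  field_affine (cnn sigma N K m).
Proof.
  induction m as [|k IH]; intro Hshift.
  - exists (fun X => X), (const_field 0); split.
    + intros a b X Y p; reflexivity.
    + intros X p; unfold const_field; simpl; ring.
  - destruct (affine_of_scaled_shift _ _ (Hshift k (Nat.lt_succ_diag_r k)))
      as [HS Hsigma].
    apply (field_affine_layer_comp _ _ _ _ _ HS Hsigma).
    apply IH; intros i Hi; apply Hshift; lia.
Qed.

Theorem mainTheorem7 (m : nat) (sigma : nat -> R -> R) (N : nat -> nat) (K : nat -> field)
  (hK : forall i, (i < m)%nat -> supported_in (N i) (K i))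
  (hsigma : forall i, (i < m)%nat -> piecewise_differentiable (sigma i))
  (hequiv : forall i, (i < m)%nat -> forall (X : field) (c : R), bounded_field X ->
      forall p, layer (sigma i) (N i) (K i) (fadd X (const_field c)) p
                = layer (sigma i) (N i) (K i) X p + c) :
  affine_on_bounded (cnn sigma N K m).
Proof.
  apply field_affine_on_bounded, cnn_field_affine.
  intros i Hi; apply activation_shift_of_layer_equivariant, hequiv, Hi.
Qed.
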